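(* Assume the Two-interval setup below, with $\pm a$ in the limit point case and $0^\mp$ in the limit circle nonoscillatory case. Let $R_0\in SL(2,\mathbb R)$ with $(R_0)_{11}=(R_0)_{22}$, and let $S_{R_0}$ be the restriction of $S_{max}$ to $\{g:(\tilde g(0^-),\tilde g'(0^-))^T=R_0(\tilde g(0^+),\tilde g'(0^+))^T\}$. Define $\alpha,\alpha'\in(0,\pi]$ from $R_0=\begin{pmatrix}R_{11}&R_{12}\\R_{21}&R_{11}\end{pmatrix}$ by: $\alpha=\cot^{-1}\frac{R_{11}+1}{R_{12}}$, $\alpha'=\cot^{-1}\frac{R_{11}-1}{R_{12}}$ if $R_{12}\ne0$; $\alpha=\cot^{-1}\frac{-R_{21}}2$, $\alpha'=\pi$ if $R_{12}=0$, $R_{11}=-1$; $\alpha=\pi$, $\alpha'=\cot^{-1}\frac{R_{21}}2$ if $R_{12}=0$, $R_{11}=1$. Then $S_{R_0}$ is unitarily equivalent to $T^+_\alpha\oplus T^+_{\alpha'}$ in $L^2((0,a);rdx)\oplus L^2((0,a);rdx)$.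
   Context: Two-interval setup. Let $a\in(0,\infty]$ and let $p,q,r$ be real measurable on $(-a,0)\cup(0,a)$, even ($p(-x)=p(x)$ etc.), with $p,r>0$ a.e. and $1/p,q,r\in L^1_{loc}((-a,0))$ (hence also on $(0,a)$). Let $\tau^\pm$ be the expression $\frac1r[-\frac{d}{dx}p\frac{d}{dx}+q]$ on $(0,a)$ resp. $(-a,0)$, with maximal/minimal operators $T^\pm_{max},T^\pm_{min}$ in $L^2$ of the respective interval with weight $r$ (maximal: $\tau^\pm$ on $g\in L^2$ with $g,pg'\in AC_{loc}$ and $\tau^\pm g\in L^2$; minimal: closure of restriction to compactly supported elements); $S_{max}=T^-_{max}\oplus T^+_{max}$, $S_{min}=T^-_{min}\oplus T^+_{min}$, and $S_{min}$ is assumed bounded below by $\lambda_0$. $y^{[1]}=py'$, $W(f,g)=fg^{[1]}-f^{[1]}g$. Limit circle at an endpoint: all solutions of $\tau u=zu$ in $L^2(rdx)$ near it for all $z$; limit point otherwise. At $0^+$ (left endpoint of $(0,a)$) fix principal/nonprincipal solutions $u_{0^+},\hat u_{0^+}$ of $\tau u=\lambda_0u$ (principal: real solution nonvanishing near $0^+$ with $\int p^{-1}u^{-2}=\infty$ near $0^+$; nonprincipal: linearly independent real solution) with $W(\hat u_{0^+},u_{0^+})=1$, and at $0^-$ use $u_{0^-}(x)=-u_{0^+}(-x)$, $\hat u_{0^-}(x)=\hat u_{0^+}(-x)$. Generalized boundary values: $\tilde g(0^+)=-\lim_{x\downarrow0}W(u_{0^+},g)(x)$, $\tilde g'(0^+)=\lim_{x\downarrow0}W(\hat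 u_{0^+},g)(x)$, $\tilde g(0^-)=-\lim_{x\uparrow0}W(u_{0^-},g)(x)$, $\tilde g'(0^-)=\lim_{x\uparrow0}W(\hat u_{0^-},g)(x)$. For $\alpha\in(0,\pi]$, $T^+_\alpha$ is the restriction of $T^+_{max}$ to $\{g:\tilde g(0^+)\cos\alpha+\tilde g'(0^+)\sin\alpha=0\}$. $\cot^{-1}$ takes values in $(0,\pi)$. *)

From HB Require Import structures.
From mathcomp Require Import all_boot all_order all_algebra.
From mathcomp Require Import all_classical all_reals all_analysis.
Set Implicit Arguments. Unset Strict Implicit. Unset Printing Implicit Defensive.
Import Order.TTheory GRing.Theory Num.Theory numFieldNormedType.Exports.
Local Open Scope classical_set_scope.
Local Open Scope ring_scope.

Section TwoInterval.
Variable R : realType.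
Local Notation mu := (@lebesgue_measure R).

Definition Ipos (a : \bar R) : set R := [set x | 0 < x /\ (x%:E < a)%E].
Definition Ineg (a : \bar R) : set R := [set x | (- a < x%:E)%E /\ x < 0].
Definition Jtwo (a : \bar R) : set R := Ineg a `|` Ipos a.

Definition rint (s t : R) (f : R -> R) : R :=
  fine (\int[mu]_(x in `[s, t]) (f x)%:E).

Definition loc_int (I : set R) (f : R -> R) : Prop :=
  forall s t, s <= t -> `[s, t] `<=` I -> mu.-integrable `[s, t] (EFin \o f).

(** g, g1 : real functions with g in AC_loc(I), g1 = p g' (chosen AC_loc
    version of the quasi-derivative), and  -(g1)' + q g = r f  a.e.;
    written through the integral characterisation of local absolute
    continuity. *)
Definition qsol (I : set R) (p q r : R -> R) (g g1 f : R -> R) : Prop :=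
  loc_int I (fun x => g1 x / p x) /\
  loc_int I (fun x => q x * g x - r x * f x) /\
  forall s t, s <= t -> `[s, t] `<=` I ->
    g t - g s = rint s t (fun x => g1 x / p x) /\
    g1 t - g1 s = rint s t (fun x => q x * g x - r x * f x).

(** complex-valued functions, represented by (real part, imaginary part) *)
Definition cfun := ((R -> R) * (R -> R))%type.

(** complex solution of tau u = z u (z = zr + i zi) on I, with quasi-derivative u1 *)
Definition csol (I : set R) (p q r : R -> R) (zr zi : R) (u u1 : cfun) : Prop :=
  qsol I p q r u.1 u1.1 (fun x => zr * u.1 x - zi * u.2 x) /\
  qsol I p q r u.2 u1.2 (fun x => zr * u.2 x + zi * u.1 x).

Definition cnorm2 (A : set R) (r : R -> R) (g : cfun) : \bar R :=
  \int[mu]_(x in A) (r x * (g.1 x ^+ 2 + g.2 x ^+ 2))%:E.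
Definition L2c (A : set R) (r : R -> R) (g : cfun) : Prop :=
  measurable_fun A g.1 /\ measurable_fun A g.2 /\
  mu.-integrable A (fun x => (r x * (g.1 x ^+ 2 + g.2 x ^+ 2))%:E).
Definition aeqc (A : set R) (g h : cfun) : Prop :=
  {ae mu, forall x, A x -> g.1 x = h.1 x /\ g.2 x = h.2 x}.

Definition cadd (g h : cfun) : cfun :=
  (fun x => g.1 x + h.1 x, fun x => g.2 x + h.2 x).
(** multiplication by the complex scalar c1 + i c2 *)
Definition cscale (c1 c2 : R) (g : cfun) : cfun :=
  (fun x => c1 * g.1 x - c2 * g.2 x, fun x => c1 * g.2 x + c2 * g.1 x).

(** limit circle at an endpoint, given via the sets "near the endpoint":
    for every z, every solution of tau u = z u on I lies in L^2 near it. *)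
Definition LC_right (a : \bar R) (p q r : R -> R) : Prop :=
  forall zr zi (u u1 : cfun), csol (Ipos a) p q r zr zi u u1 ->
    forall c, 0 < c -> (c%:E < a)%E ->
      L2c [set x | c < x /\ (x%:E < a)%E] r u.
Definition LC_left_neg (a : \bar R) (p q r : R -> R) : Prop :=
  forall zr zi (u u1 : cfun), csol (Ineg a) p q r zr zi u u1 ->
    forall c, (- a < c%:E)%E -> c < 0 ->
      L2c [set x | (- a < x%:E)%E /\ x < c] r u.
Definition LC_zero_pos (a : \bar R) (p q r : R -> R) : Prop :=
  forall zr zi (u u1 : cfun), csol (Ipos a) p q r zr zi u u1 ->
    forall c, 0 < c -> (c%:E < a)%E -> L2c [set x | 0 < x /\ x < c] r u.
Definition LC_zero_neg (a : \bar R) (p q r : R -> R) : Prop :=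
  forall zr zi (u u1 : cfun), csol (Ineg a) p q r zr zi u u1 ->
    forall c, c < 0 -> (- a < c%:E)%E -> L2c [set x | c < x /\ x < 0] r u.

Definition NO_zero_pos (a : \bar R) (p q r : R -> R) : Prop :=
  exists lam : R, forall u u1 : R -> R,
    qsol (Ipos a) p q r u u1 (fun x => lam * u x) ->
    (exists x, Ipos a x /\ u x != 0) ->
    exists e, 0 < e /\ forall x, 0 < x -> x < e -> u x != 0.
Definition NO_zero_neg (a : \bar R) (p q r : R -> R) : Prop :=
  exists lam : R, forall u u1 : R -> R,
    qsol (Ineg a) p q r u u1 (fun x => lam * u x) ->
    (exists x, Ineg a x /\ u x != 0) ->
    exists e, 0 < e /\ forall x, - e < x -> x < 0 -> u x != 0.

Definition wr (u u1 : R -> R) (g g1 : cfun) : cfun :=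
  (fun x => u x * g1.1 x - u1 x * g.1 x, fun x => u x * g1.2 x - u1 x * g.2 x).

Definition clim (F : set_system R) (w : cfun) (l : R * R) : Prop :=
  (w.1 @ F --> l.1) /\ (w.2 @ F --> l.2).

Definition tmax (I : set R) (p q r : R -> R) (g g1 f : cfun) : Prop :=
  L2c I r g /\ L2c I r f /\
  qsol I p q r g.1 g1.1 f.1 /\ qsol I p q r g.2 g1.2 f.2.

Definition smax (a : \bar R) (p q r : R -> R) (g g1 f : cfun) : Prop :=
  tmax (Ineg a) p q r g g1 f /\ tmax (Ipos a) p q r g g1 f.

(** arccot with values in (0, pi) *)
Definition acot (y : R) : R := pi / 2 - atan y.

(** the angles alpha, alpha' of the theorem, for R0 = [[m11,m12],[m21,m11]] *)
Definition alpha_of (m11 m12 m21 : R) : R :=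
  if m12 != 0 then acot ((m11 + 1) / m12)
  else if m11 == -1 then acot (- m21 / 2) else pi.
Definition alpha'_of (m11 m12 m21 : R) : R :=
  if m12 != 0 then acot ((m11 - 1) / m12)
  else if m11 == -1 then pi else acot (m21 / 2).

(** A crude model of a (complex) Hilbert space of L^2 type: carrier of
    representatives, membership, a.e.-equivalence, operations, squared norm *)
Record hmodel := HModel {
  hcar : Type;
  hmem : hcar -> Prop;
  heq : hcar -> hcar -> Prop;
  hadd : hcar -> hcar -> hcar;
  hscale : R -> R -> hcar -> hcar;
  hnorm2 : hcar -> \bar R }.

(** unitary equivalence of the operators with graphs S (in H) and T (in K):
    a map U, well defined on classes, complex linear, isometric, onto,
    with U S U^{-1} = T (graphs correspond modulo equality of classes). *)
Definition unitarily_equiv (H K : hmodel)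
    (S : hcar H -> hcar H -> Prop) (T : hcar K -> hcar K -> Prop) : Prop :=
  exists U : hcar H -> hcar K,
    (forall g, hmem g -> hmem (U g)) /\
    (forall g h, hmem g -> hmem h -> heq g h -> heq (U g) (U h)) /\
    (forall g h, hmem g -> hmem h -> heq (U (hadd g h)) (hadd (U g) (U h))) /\
    (forall c1 c2 g, hmem g -> heq (U (hscale c1 c2 g)) (hscale c1 c2 (U g))) /\
    (forall g, hmem g -> hnorm2 (U g) = hnorm2 g) /\
    (forall k, hmem k -> exists g, hmem g /\ heq (U g) k) /\
    (forall g f, S g f -> exists g' f', T g' f' /\ heq (U g) g' /\ heq (U f) f') /\
    (forall g' f', T g' f' -> exists g f, S g f /\ heq (U g) g' /\ heq (U f) f').

Definition HJ (a : \bar R) (r : R -> R) : hmodel :=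
  @HModel cfun (L2c (Jtwo a) r) (aeqc (Jtwo a)) cadd cscale (cnorm2 (Jtwo a) r).
Definition HPP (a : \bar R) (r : R -> R) : hmodel :=
  @HModel (cfun * cfun)%type
    (fun g => L2c (Ipos a) r g.1 /\ L2c (Ipos a) r g.2)
    (fun g h => aeqc (Ipos a) g.1 h.1 /\ aeqc (Ipos a) g.2 h.2)
    (fun g h => (cadd g.1 h.1, cadd g.2 h.2))
    (fun c1 c2 g => (cscale c1 c2 g.1, cscale c1 c2 g.2))
    (fun g => (cnorm2 (Ipos a) r g.1 + cnorm2 (Ipos a) r g.2)%E).

(** Boundary values at 0+ with respect to the fixed u_{0+}, \hat u_{0+}
    (given with their quasi-derivatives u1, uh1):
    bv+ = (-lim W(u_{0+},g), lim W(\hat u_{0+}, g)) as x -> 0+. *)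
Definition bv_pos (u u1 uh uh1 : R -> R) (g g1 : cfun) (A B : R * R) : Prop :=
  clim (0 : R)^'+ (wr u u1 g g1) (- A.1, - A.2) /\
  clim (0 : R)^'+ (wr uh uh1 g g1) B.
(** at 0- with u_{0-}(x) = -u_{0+}(-x), \hat u_{0-}(x) = \hat u_{0+}(-x);
    their quasi-derivatives are u_{0-}^[1](x) = u1(-x),
    \hat u_{0-}^[1](x) = - uh1(-x)  (p being even). *)
Definition bv_neg (u u1 uh uh1 : R -> R) (g g1 : cfun) (A B : R * R) : Prop :=
  clim (0 : R)^'- (wr (fun x => - u (- x)) (fun x => u1 (- x)) g g1) (- A.1, - A.2) /\
  clim (0 : R)^'- (wr (fun x => uh (- x)) (fun x => - uh1 (- x)) g g1) B.

Definition talpha (a : \bar R) (p q r : R -> R) (u u1 uh uh1 : R -> R)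
    (al : R) (g f : cfun) : Prop :=
  exists g1 : cfun, tmax (Ipos a) p q r g g1 f /\
  exists A B : R * R, bv_pos u u1 uh uh1 g g1 A B /\
    A.1 * cos al + B.1 * sin al = 0 /\ A.2 * cos al + B.2 * sin al = 0.

(** graph of S_{R0}, R0 = [[m11, m12], [m21, m22]] *)
Definition sR0 (a : \bar R) (p q r : R -> R) (u u1 uh uh1 : R -> R)
    (m11 m12 m21 m22 : R) (g f : cfun) : Prop :=
  exists g1 : cfun, smax a p q r g g1 f /\
  exists Ap Bp An Bn : R * R,
    bv_pos u u1 uh uh1 g g1 Ap Bp /\ bv_neg u u1 uh uh1 g g1 An Bn /\
    An.1 = m11 * Ap.1 + m12 * Bp.1 /\ Bn.1 = m21 * Ap.1 + m22 * Bp.1 /\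
    An.2 = m11 * Ap.2 + m12 * Bp.2 /\ Bn.2 = m21 * Ap.2 + m22 * Bp.2.

End TwoInterval.
Arguments unitarily_equiv {R} H K S T.

From HB Require Import structures.
From mathcomp Require Import all_boot all_order all_algebra.
From mathcomp Require Import all_classical all_reals all_analysis.
From mathcomp Require Import measurable_realfun.
From mathcomp.algebra_tactics Require Import ring lra.
Set Implicit Arguments. Unset Strict Implicit. Unset Printing Implicit Defensive.
Import Order.TTheory GRing.Theory Num.Theory numFieldNormedType.Exports.
Local Open Scope classical_set_scope.
Local Open Scope ring_scope.

(* Since p, q and r are even, x |-> - x maps solutions on (0,a) to solutions
   on (-a,0). Hence g |-> U g = ((g(x) - g(-x)) / sqrt 2, (g(x) + g(-x)) / sqrt 2),
   read on (0,a), is a unitary map from L^2((-a,0) u (0,a)) onto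
   L^2(0,a) (+) L^2(0,a) carrying S_max into T+_max (+) T+_max. It transforms
   the generalized boundary values linearly: the odd part has boundary values
   ((g~(0+) - g~(0-)) / sqrt 2, (g~'(0+) + g~'(0-)) / sqrt 2), the even part
   ((g~(0+) + g~(0-)) / sqrt 2, (g~'(0+) - g~'(0-)) / sqrt 2). For R0 with
   equal diagonal entries and determinant 1, the coupled condition given by R0
   is then equivalent to the separated condition of angle alpha on the odd
   part and of angle alpha' on the even part. *)

Section Mirror.
Variable R : realType.
Local Notation mu := (@lebesgue_measure R).

Definition mirror (A : set R) : set R := [set x | A (- x)].

Lemma mirrorK : involutive mirror.
Proof. by move=> A; apply/seteqP; split => x; rewrite /mirror /= opprK. Qed.

Lemma mirror_itv (s t : R) : mirror `[s, t] = `[- t, - s]%classic.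
Proof.
apply/seteqP; split => x; rewrite /mirror /= !in_itv /= => /andP[h1 h2];
  apply/andP; split; by [rewrite lerNr | rewrite lerNl].
Qed.

Lemma subset_mirror_itv (I : set R) s t :
  `[s, t]%classic `<=` mirror I -> `[- t, - s]%classic `<=` I.
Proof.
rewrite -mirror_itv => sub x /sub.
by rewrite /mirror /= opprK.
Qed.

Lemma measurable_mirror A : measurable A -> measurable (mirror A).
Proof. by move=> mA; rewrite -[mirror A]setTI; exact: (@oppr_measurable R setT). Qed.

Lemma lebesgue_measure_mirror A : measurable A -> mu (mirror A) = mu A.
Proof. exact: lebesgue_measureN. Qed.

Lemma negligible_mirror N : mu.-negligible N -> mu.-negligible (mirror N).
Proof.
move=> [A [mA A0 NA]]; exists (mirror A); split.
- exact: measurable_mirror.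
- by rewrite lebesgue_measure_mirror.
- by move=> x; exact: NA.
Qed.

Lemma measurable_fun_mirror d (T : measurableType d) D (f : R -> T) :
  measurable D -> measurable_fun D f -> measurable_fun (mirror D) (fun x => f (- x)).
Proof.
move=> mD mf; apply: (@measurable_comp _ _ _ _ _ _ D f (mirror D) -%R) => //.
by move=> _ [x Dx <-].
Qed.

Lemma ge0_integral_mirror D (f : R -> \bar R) : measurable D -> measurable_fun D f ->
  (forall x, D x -> 0 <= f x)%E ->
  (\int[mu]_(x in D) f x = \int[mu]_(x in mirror D) f (- x)%R)%E.
Proof.
move=> mD mf f0.
change (\int[mu]_(x in mirror D) f (- x)%R)%E with
  (\int[mu]_(x in (-%R : R -> measurableTypeR R) @^-1` D)
     (f \o (-%R : R -> measurableTypeR R)) x)%E.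
rewrite -[RHS]ge0_integral_pushforward//=; last by move=> y; rewrite inE; exact: f0.
by apply: eq_measure_integral => //= A mA _; exact/esym/lebesgue_measureN.
Qed.

Lemma integral_mirror D (f : R -> \bar R) : measurable D -> measurable_fun D f ->
  (\int[mu]_(x in D) f x = \int[mu]_(x in mirror D) f (- x)%R)%E.
Proof.
move=> mD mf; rewrite integralE [RHS]integralE.
rewrite ge0_integral_mirror//; last exact: measurable_funepos.
rewrite [X in (_ - X)%E]ge0_integral_mirror//; last exact: measurable_funeneg.
congr (_ - _)%E; apply: eq_integral => x _.
- by rewrite -[LHS]/((f^\+ \o -%R) x)%E -funepos_comp.
- by rewrite -[LHS]/((f^\- \o -%R) x)%E -funeneg_comp.
Qed.

Lemma integrable_mirror D (f : R -> \bar R) : measurable D ->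
  mu.-integrable D f -> mu.-integrable (mirror D) (fun x => f (- x)).
Proof.
move=> mD /integrableP[mf fi]; apply/integrableP; split.
  exact: measurable_fun_mirror.
rewrite (@ge0_integral_mirror D (fun x => `|f x|)%E) // in fi.
exact: measurableT_comp.
Qed.

Lemma mirror_Ipos (a : \bar R) : mirror (Ipos a) = Ineg a.
Proof.
apply/seteqP; split => x; rewrite /mirror /Ipos /Ineg /= EFinN.
  by move=> [h1 h2]; split; [rewrite lteNl | rewrite oppr_gt0 in h1].
by move=> [h1 h2]; split; [rewrite oppr_gt0 | rewrite lteNl].
Qed.

Lemma mirror_Ineg (a : \bar R) : mirror (Ineg a) = Ipos a.
Proof. by rewrite -mirror_Ipos mirrorK. Qed.

Lemma measurable_Ipos (a : \bar R) : measurable (Ipos a).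
Proof.
case: a => [s| |].
- rewrite (_ : Ipos _ = `]0, s[%classic); first exact: measurable_itv.
  apply/seteqP; split => x; rewrite /Ipos /= in_itv /= lte_fin.
    by move=> [-> ->].
  by move=> /andP[-> ->].
- rewrite (_ : Ipos _ = `]0, +oo[%classic); first exact: measurable_itv.
  apply/seteqP; split => x; rewrite /Ipos /= in_itv /= ?ltry ?andbT.
    by move=> [].
  by move=> ->.
- rewrite (_ : Ipos _ = set0) //.
  apply/seteqP; split => x; rewrite /Ipos //=.
  by move=> [_]; rewrite ltNge leNye.
Qed.

Lemma measurable_Ineg (a : \bar R) : measurable (Ineg a).
Proof. by rewrite -mirror_Ipos; apply: measurable_mirror; exact: measurable_Ipos. Qed.

Lemma measurable_Jtwo (a : \bar R) : measurable (Jtwo a).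
Proof. exact: measurableU (measurable_Ineg a) (measurable_Ipos a). Qed.

Lemma disj_Ineg_Ipos (a : \bar R) : [disjoint Ineg a & Ipos a].
Proof. by apply/disj_setPS => x [[_ h1] [h2 _]]; rewrite /=; lra. Qed.

End Mirror.

Section QuasiSolutions.
Variable R : realType.
Local Notation mu := (@lebesgue_measure R).

Lemma eq_rint (s t : R) h1 h2 :
  {in `[s, t]%classic, h1 =1 h2} -> rint s t h1 = rint s t h2.
Proof. by move=> e; rewrite /rint; congr fine; apply: eq_integral => x /e ->. Qed.

Lemma rint_lin (s t al be : R) h1 h2 :
  mu.-integrable `[s, t]%classic (EFin \o h1) ->
  mu.-integrable `[s, t]%classic (EFin \o h2) ->
  rint s t (fun x => al * h1 x + be * h2 x) = al * rint s t h1 + be * rint s t h2.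
Proof.
move=> i1 i2; rewrite /rint.
have -> : (\int[mu]_(x in `[s, t]%classic) (al * h1 x + be * h2 x)%:E =
    al%:E * \int[mu]_(x in `[s, t]%classic) (h1 x)%:E +
    be%:E * \int[mu]_(x in `[s, t]%classic) (h2 x)%:E)%E.
  rewrite -(integralZl _ i1) // -(integralZl _ i2) // -integralD //.
  - exact: integrableZl.
  - exact: integrableZl.
have f1 : (\int[mu]_(x in `[s, t]%classic) (h1 x)%:E)%E \is a fin_num.
  exact: integrable_fin_num.
have f2 : (\int[mu]_(x in `[s, t]%classic) (h2 x)%:E)%E \is a fin_num.
  exact: integrable_fin_num.
by rewrite fineD ?fineM // fin_numM.
Qed.

Lemma rint_mirror (s t : R) h : measurable_fun `[- t, - s]%classic h ->
  rint s t (fun x => h (- x)) = rint (- t) (- s) h.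
Proof.
move=> mh; rewrite /rint (@integral_mirror _ `[- t, - s]%classic (EFin \o h)) //.
  by rewrite mirror_itv !opprK.
exact/measurable_EFinP.
Qed.

Lemma eq_loc_int (I : set R) h1 h2 : (forall x, I x -> h1 x = h2 x) ->
  loc_int I h1 -> loc_int I h2.
Proof.
move=> e i1 s t st sub; apply: eq_integrable (i1 s t st sub) => //.
by move=> x /set_mem /sub /e /= ->.
Qed.

Lemma loc_int_lin (I : set R) (al be : R) h1 h2 : loc_int I h1 -> loc_int I h2 ->
  loc_int I (fun x => al * h1 x + be * h2 x).
Proof.
move=> i1 i2 s t st sub.
apply: (@eq_integrable _ _ _ mu _ _ (fun x => al%:E * (h1 x)%:E + be%:E * (h2 x)%:E)%E).
- by [].
- by move=> x _; rewrite /= EFinD !EFinM.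
by apply: integrableD => //; apply: integrableZl => //; [exact: i1 | exact: i2].
Qed.

Lemma loc_int_mirror (I : set R) h :
  loc_int I h -> loc_int (mirror I) (fun x => h (- x)).
Proof.
move=> i1 s t st sub.
have st' : - t <= - s by rewrite lerN2.
have := integrable_mirror (measurable_itv _) (i1 _ _ st' (subset_mirror_itv sub)).
by rewrite mirror_itv !opprK.
Qed.

Lemma loc_int_measurable (I : set R) h s t : loc_int I h -> s <= t ->
  `[s, t]%classic `<=` I -> measurable_fun `[s, t]%classic h.
Proof. by move=> i1 st sub; move: (i1 s t st sub) => /measurable_int/measurable_EFinP. Qed.

Variables p q r : R -> R.

Lemma eq_qsol (I : set R) g g1 f g' g1' f' :
  (forall x, I x -> [/\ g x = g' x, g1 x = g1' x & f x = f' x]) ->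
  qsol I p q r g g1 f -> qsol I p q r g' g1' f'.
Proof.
move=> e [l1 [l2 h]]; split; last split.
- by apply: eq_loc_int l1 => x /e [_ -> _].
- by apply: eq_loc_int l2 => x /e [-> _ ->].
move=> s t st sub; have [s1 s2] := h s t st sub.
have [gs g1s _] : [/\ g s = g' s, g1 s = g1' s & f s = f' s].
  by apply: e; apply: sub; rewrite /= in_itv /= lexx st.
have [gt g1t _] : [/\ g t = g' t, g1 t = g1' t & f t = f' t].
  by apply: e; apply: sub; rewrite /= in_itv /= lexx st.
split.
  by rewrite -gs -gt s1; apply: eq_rint => x /set_mem /sub /e [_ -> _].
by rewrite -g1s -g1t s2; apply: eq_rint => x /set_mem /sub /e [-> _ ->].
Qed.

Lemma qsol_lin (I : set R) (al be : R) g g1 f h h1 k :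
  qsol I p q r g g1 f -> qsol I p q r h h1 k ->
  qsol I p q r (fun x => al * g x + be * h x) (fun x => al * g1 x + be * h1 x)
    (fun x => al * f x + be * k x).
Proof.
move=> [l1 [l2 H1]] [m1 [m2 H2]]; split; last split.
- by apply: eq_loc_int (loc_int_lin al be l1 m1) => x _; rewrite /=; ring.
- by apply: eq_loc_int (loc_int_lin al be l2 m2) => x _; rewrite /=; ring.
move=> s t st sub; have [a1 a2] := H1 s t st sub; have [b1 b2] := H2 s t st sub.
split.
  transitivity (al * (g t - g s) + be * (h t - h s)); first ring.
  rewrite a1 b1 -rint_lin; [|exact: l1|exact: m1].
  by apply: eq_rint => x _ /=; ring.
transitivity (al * (g1 t - g1 s) + be * (h1 t - h1 s)); first ring.
rewrite a2 b2 -rint_lin; [|exact: l2|exact: m2].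
by apply: eq_rint => x _ /=; ring.
Qed.

Hypotheses (p_even : forall x, p (- x) = p x) (q_even : forall x, q (- x) = q x)
  (r_even : forall x, r (- x) = r x).

Lemma qsol_mirror (I : set R) g g1 f : qsol I p q r g g1 f ->
  qsol (mirror I) p q r (fun x => g (- x)) (fun x => - g1 (- x)) (fun x => f (- x)).
Proof.
move=> [l1 [l2 H]]; split; last split.
- apply: eq_loc_int (loc_int_lin (-1) 0 (loc_int_mirror l1) (loc_int_mirror l1)) => x _.
  by rewrite /= p_even; ring.
- by apply: eq_loc_int (loc_int_mirror l2) => x _; rewrite /= q_even r_even.
move=> s t st sub; have st' : - t <= - s by rewrite lerN2.
have sub' := subset_mirror_itv sub.
have [a1 a2] := H (- t) (- s) st' sub'.
split.
  transitivity (- (g (- s) - g (- t))); first ring.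
  rewrite a1 -rint_mirror; last exact: (loc_int_measurable l1 st' sub').
  transitivity (-1 * rint s t (fun x => g1 (- x) / p (- x)) +
                0 * rint s t (fun x => g1 (- x) / p (- x))); first ring.
  rewrite -rint_lin; [|exact: (loc_int_mirror l1)|exact: (loc_int_mirror l1)].
  by apply: eq_rint => x _ /=; rewrite p_even; ring.
transitivity (g1 (- s) - g1 (- t)); first ring.
rewrite a2 -rint_mirror; last exact: (loc_int_measurable l2 st' sub').
by apply: eq_rint => x _ /=; rewrite q_even r_even.
Qed.

End QuasiSolutions.

Section ComplexFunctions.
Variable R : realType.
Local Notation mu := (@lebesgue_measure R).

Definition clin (al be : R) (g h : cfun R) : cfun R :=
  (fun x => al * g.1 x + be * h.1 x, fun x => al * g.2 x + be * h.2 x).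
Definition cmirror (g : cfun R) : cfun R := (fun x => g.1 (- x), fun x => g.2 (- x)).

Lemma aeqc_pt (A : set R) (g h : cfun R) :
  (forall x, A x -> g.1 x = h.1 x /\ g.2 x = h.2 x) -> aeqc A g h.
Proof. by move=> e; apply: aeW => x; exact: e. Qed.

Lemma eq_L2c (A : set R) r (g h : cfun R) : measurable A ->
  (forall x, A x -> g.1 x = h.1 x /\ g.2 x = h.2 x) -> L2c A r g -> L2c A r h.
Proof.
move=> mA e [m1 [m2 i]]; split; last split.
- by apply: eq_measurable_fun m1 => x /set_mem /e [].
- by apply: eq_measurable_fun m2 => x /set_mem /e [].
by apply: eq_integrable i => // x /set_mem /e [-> ->].
Qed.

Lemma L2c_mirror (A : set R) r (g : cfun R) : (forall x, r (- x) = r x) ->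
  measurable A -> L2c A r g -> L2c (mirror A) r (cmirror g).
Proof.
move=> re mA [m1 [m2 i]]; split; last split.
- exact: measurable_fun_mirror.
- exact: measurable_fun_mirror.
have := integrable_mirror mA i.
by apply: eq_integrable => //=; [exact: measurable_mirror | move=> x _; rewrite re].
Qed.

Lemma L2cS (A B : set R) r (g : cfun R) : measurable A -> measurable B ->
  B `<=` A -> L2c A r g -> L2c B r g.
Proof.
move=> mA mB BA [m1 [m2 i]]; split; last split.
- exact: measurable_funS m1.
- exact: measurable_funS m2.
exact: integrableS i.
Qed.

Lemma L2cU (A B : set R) r (g : cfun R) : measurable A -> measurable B ->
  L2c A r g -> L2c B r g -> L2c (A `|` B) r g.
Proof.
move=> mA mB [m1 [m2 i]] [n1 [n2 j]]; split; last split.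
- exact/measurable_funU.
- exact/measurable_funU.
set F := fun x => (r x * (g.1 x ^+ 2 + g.2 x ^+ 2))%:E.
move/integrableP : i => [mi fi]; move/integrableP : j => [mj fj].
have mAB : measurable (A `|` B) by exact: measurableU.
apply/integrableP; split; first exact/measurable_funU.
apply: (@le_lt_trans _ _ (\int[mu]_(x in A) `|F x| + \int[mu]_(x in B) `|F x|)%E);
  last exact: lte_add_pinfty.
rewrite -{1}(setDUK (@subsetUl _ A B)) (@ge0_integral_setU _ _ _ mu A ((A `|` B) `\` A)) //.
- apply: leeD => //; apply: ge0_subset_integral => //.
  + exact: measurableD.
  + by apply: measurableT_comp => //; exact: measurable_funS mj.
  + by move=> x [[]].
- exact: measurableD.
- by rewrite setDUK ?subsetUl //; apply: measurableT_comp => //; exact/measurable_funU.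
- by apply/disj_setPS => x [h1 [_ h2]].
Qed.

Lemma sqr_clin_le (al be a1 a2 b1 b2 : R) :
  (al * a1 + be * b1) ^+ 2 + (al * a2 + be * b2) ^+ 2 <=
  2 * (al ^+ 2 + be ^+ 2) * ((a1 ^+ 2 + a2 ^+ 2) + (b1 ^+ 2 + b2 ^+ 2)).
Proof.
have := sqr_ge0 (al * a1 - be * b1); have := sqr_ge0 (al * a2 - be * b2).
have := sqr_ge0 (al * b1); have := sqr_ge0 (al * b2).
have := sqr_ge0 (be * a1); have := sqr_ge0 (be * a2).
nra.
Qed.

Lemma L2c_clin (A : set R) r (al be : R) (g h : cfun R) : measurable A ->
  measurable_fun A r -> L2c A r g -> L2c A r h -> L2c A r (clin al be g h).
Proof.
move=> mA mr [m1 [m2 i]] [n1 [n2 j]].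
have ml (f1 f2 : R -> R) : measurable_fun A f1 -> measurable_fun A f2 ->
    measurable_fun A (fun x => al * f1 x + be * f2 x).
  by move=> mf1 mf2; apply: measurable_funD; apply: measurable_funM.
split; last split; rewrite /=; [exact: ml | exact: ml |].
pose K := 2 * (al ^+ 2 + be ^+ 2).
apply: (@le_integrable _ _ _ mu A mA _ (fun x =>
  (K * (`|r x * (g.1 x ^+ 2 + g.2 x ^+ 2)| + `|r x * (h.1 x ^+ 2 + h.2 x ^+ 2)|))%:E)).
- apply/measurable_EFinP; apply: measurable_funM => //.
  by apply: measurable_funD; apply: measurable_funX; exact: ml.
- move=> x Ax; rewrite !abse_EFin lee_fin.
  rewrite [X in _ <= X]ger0_norm; last first.
    by apply: mulr_ge0; [rewrite /K; nra | exact: addr_ge0].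
  rewrite !normrM !(@ger0_norm _ (_ + _)) ?addr_ge0 ?sqr_ge0 //.
  by rewrite -mulrDr mulrCA; apply: ler_wpM2l => //; exact: sqr_clin_le.
- apply: (@eq_integrable _ _ _ mu A mA (fun x => K%:E *
    ((abse \o (fun x => (r x * (g.1 x ^+ 2 + g.2 x ^+ 2))%:E)) x +
     (abse \o (fun x => (r x * (h.1 x ^+ 2 + h.2 x ^+ 2))%:E)) x))%E).
    by move=> x _; rewrite /comp !abse_EFin -EFinD -EFinM.
  by apply: integrableZl => //; apply: integrableD => //; exact: integrable_abse.
Qed.

Lemma clim_clin (F : set_system R) {FF : Filter F} (al be : R) (w w' : cfun R) l l' :
  clim F w l -> clim F w' l' ->
  clim F (clin al be w w') (al * l.1 + be * l'.1, al * l.2 + be * l'.2).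
Proof.
by move=> [h1 h2] [h3 h4]; split; apply: cvgD; apply: cvgM => //; exact: cvg_cst.
Qed.

Lemma clim_mirror_left (w : cfun R) l :
  clim (0 : R)^'- w l -> clim (0 : R)^'+ (cmirror w) l.
Proof. by move=> [h1 h2]; split; [move/cvg_at_leftNP : h1 | move/cvg_at_leftNP : h2]; rewrite oppr0. Qed.

Lemma clim_mirror_right (w : cfun R) l :
  clim (0 : R)^'+ w l -> clim (0 : R)^'- (cmirror w) l.
Proof. by move=> [h1 h2]; split; [move/cvg_at_rightNP : h1 | move/cvg_at_rightNP : h2]; rewrite oppr0. Qed.

Lemma clim_near_eq (F : set_system R) {FF : Filter F} (w w' : cfun R) l :
  (\forall x \near F, w.1 x = w'.1 x /\ w.2 x = w'.2 x) -> clim F w l -> clim F w' l.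
Proof.
move=> e [h1 h2]; split.
- by apply: cvg_trans h1; apply: near_eq_cvg; apply: filterS e => x [].
- by apply: cvg_trans h2; apply: near_eq_cvg; apply: filterS e => x [].
Qed.

Lemma clim_eq_right (w w' : cfun R) l :
  (forall x, 0 < x -> w.1 x = w'.1 x /\ w.2 x = w'.2 x) ->
  clim (0 : R)^'+ w l -> clim (0 : R)^'+ w' l.
Proof.
move=> e; apply: clim_near_eq; near=> x; apply: e.
by near: x; exact: nbhs_right_gt.
Unshelve. all: end_near.
Qed.

Lemma clim_eq_left (w w' : cfun R) l :
  (forall x, x < 0 -> w.1 x = w'.1 x /\ w.2 x = w'.2 x) ->
  clim (0 : R)^'- w l -> clim (0 : R)^'- w' l.
Proof.
move=> e; apply: clim_near_eq; near=> x; apply: e.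
by near: x; exact: nbhs_left_lt.
Unshelve. all: end_near.
Qed.

Lemma clim_right_clin (al be : R) (W W' w : cfun R) l l' l'' :
  clim (0 : R)^'+ W l -> clim (0 : R)^'+ W' l' ->
  (forall x, 0 < x -> w.1 x = al * W.1 x + be * W'.1 x /\
                      w.2 x = al * W.2 x + be * W'.2 x) ->
  l'' = (al * l.1 + be * l'.1, al * l.2 + be * l'.2) -> clim (0 : R)^'+ w l''.
Proof.
move=> hW hW' e ->; apply: clim_eq_right (clim_clin al be hW hW').
by move=> x /e [-> ->].
Qed.

Lemma clim_left_clin (al be : R) (W W' w : cfun R) l l' l'' :
  clim (0 : R)^'+ W l -> clim (0 : R)^'+ W' l' ->
  (forall x, x < 0 -> w.1 x = al * W.1 (- x) + be * W'.1 (- x) /\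
                      w.2 x = al * W.2 (- x) + be * W'.2 (- x)) ->
  l'' = (al * l.1 + be * l'.1, al * l.2 + be * l'.2) -> clim (0 : R)^'- w l''.
Proof.
move=> hW hW' e ->; apply: clim_eq_left (clim_mirror_right (clim_clin al be hW hW')).
by move=> x /e [-> ->].
Qed.

End ComplexFunctions.

Section BoundaryAngles.
Variable R : realType.

Definition bcond (al X Y : R) : Prop := X * cos al + Y * sin al = 0.

Lemma bcond_acot y X Y : bcond (acot y) X Y <-> Y = - (X * y).
Proof.
rewrite /bcond /acot.
have -> : pi / 2 - atan y = - (atan y - pi / 2) by rewrite opprB.
rewrite cosN sinN cosBpihalf sinBpihalf opprK.
have c0 : 0 < cos (atan y).
  by apply: cos_gt0_pihalf; rewrite atan_gtNpi2 atan_ltpi2.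
have -> : sin (atan y) = y * cos (atan y).
  by rewrite -{2}(atanK y) /tan mulfVK // gt_eqF.
rewrite mulrA -mulrDl; split.
  by move/eqP; rewrite mulf_eq0 (gt_eqF c0) orbF addrC addr_eq0 => /eqP.
by move=> ->; rewrite addrN mul0r.
Qed.

Lemma bcond_pi X Y : bcond pi X Y <-> X = 0.
Proof. by rewrite /bcond cospi sinpi; split => h; lra. Qed.

Lemma acot_bcond m12 y X Y : m12 != 0 -> X * y + Y * m12 = 0 ->
  bcond (acot (y / m12)) X Y.
Proof.
move=> m0 h; apply/bcond_acot; apply: (mulIf m0).
have -> : - (X * (y / m12)) * m12 = - (X * y) by field.
lra.
Qed.

Lemma det1_upper0 (m11 m21 : R) : m11 * m11 - 0 * m21 = 1 -> m11 = 1 \/ m11 = -1.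
Proof.
rewrite mul0r subr0 => det.
have : (m11 - 1) * (m11 + 1) = 0.
  by transitivity (m11 * m11 - 1); [ring | rewrite det subrr].
by move/eqP; rewrite mulf_eq0 subr_eq0 addr_eq0 => /orP[] /eqP; [left | right].
Qed.

Variable c : R.

Lemma bcond_alpha_of_coupled m11 m12 m21 Ap Bp An Bn :
  m11 * m11 - m12 * m21 = 1 ->
  An = m11 * Ap + m12 * Bp -> Bn = m21 * Ap + m11 * Bp ->
  bcond (alpha_of m11 m12 m21) (c * (Ap - An)) (c * (Bp + Bn)) /\
  bcond (alpha'_of m11 m12 m21) (c * (Ap + An)) (c * (Bp - Bn)).
Proof.
move=> det -> ->; rewrite /alpha_of /alpha'_of.
have [m12z|m12n] := eqVneq m12 0; rewrite /=; last first.
  split; apply: acot_bcond => //.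
  - transitivity (c * Ap * (1 - (m11 * m11 - m12 * m21))); first ring.
    by rewrite det subrr mulr0.
  - transitivity (c * Ap * ((m11 * m11 - m12 * m21) - 1)); first ring.
    by rewrite det subrr mulr0.
rewrite m12z in det *; have [->|->] := det1_upper0 det.
- rewrite (_ : (1 == -1 :> R) = false); last by apply/negbTE/eqP; lra.
  by split; [apply/bcond_pi; ring | apply/bcond_acot; field].
- by rewrite eqxx; split; [apply/bcond_acot; field | apply/bcond_pi; ring].
Qed.

Lemma coupled_of_bcond_alpha m11 m12 m21 Ao Bo Ae Be :
  m11 * m11 - m12 * m21 = 1 ->
  bcond (alpha_of m11 m12 m21) Ao Bo -> bcond (alpha'_of m11 m12 m21) Ae Be ->
  c * (Ae - Ao) = m11 * (c * (Ao + Ae)) + m12 * (c * (Bo + Be)) /\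
  c * (Bo - Be) = m21 * (c * (Ao + Ae)) + m11 * (c * (Bo + Be)).
Proof.
move=> det; rewrite /alpha_of /alpha'_of.
have [m12z|m12n] := eqVneq m12 0; rewrite /=; last first.
  move=> /bcond_acot -> /bcond_acot ->; split; first by field.
  apply/eqP; rewrite -subr_eq0; apply/eqP.
  transitivity (c * (Ao + Ae) * ((m11 * m11 - m12 * m21) - 1) / m12); first by field.
  by rewrite det subrr mulr0 mul0r.
rewrite m12z in det *; have [->|->] := det1_upper0 det.
- rewrite (_ : (1 == -1 :> R) = false); last by apply/negbTE/eqP; lra.
  by move=> /bcond_pi -> /bcond_acot ->; split; field.
- by rewrite eqxx => /bcond_acot -> /bcond_pi ->; split; field.
Qed.

End BoundaryAngles.

Lemma det_mx22 (R : comNzRingType) (A : 'M[R]_2) :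
  \det A = A ord0 ord0 * A ord_max ord_max - A ord0 ord_max * A ord_max ord0.
Proof.
rewrite (expand_det_row _ ord0) !big_ord_recl big_ord0 addr0 /cofactor !det_mx11.
rewrite /= !mxE /=.
have -> : lift ord0 (0 : 'I_1) = ord_max :> 'I_2 by apply/val_inj.
have -> : lift (ord_max : 'I_2) (0 : 'I_1) = ord0 :> 'I_2 by apply/val_inj.
by rewrite expr0 mul1r /= expr1 mulN1r mulrN.
Qed.

Section OddEvenDecomposition.
Variable R : realType.
Local Notation mu := (@lebesgue_measure R).
Variables (a : \bar R) (p q r : R -> R) (u u1 uh uh1 : R -> R).
Hypotheses (p_even : forall x, p (- x) = p x) (q_even : forall x, q (- x) = q x)
  (r_even : forall x, r (- x) = r x) (r_meas : measurable_fun (Jtwo a) r).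

Definition invsqrt2 : R := (Num.sqrt 2)^-1.
Local Notation c := invsqrt2.

Lemma invsqrt2K (x : R) : 2 * (c * c) * x = x.
Proof. by rewrite /c -invfM -expr2 sqr_sqrtr // mulfV ?mul1r. Qed.

(* Since (g (- x))' = - g' (- x), quasi-derivatives transform with the
   opposite signs. *)
Definition U (g : cfun R) : cfun R * cfun R :=
  (clin c (- c) g (cmirror g), clin c c g (cmirror g)).
Definition U1 (g1 : cfun R) : cfun R * cfun R :=
  (clin c c g1 (cmirror g1), clin c (- c) g1 (cmirror g1)).
Definition V (h : cfun R * cfun R) : cfun R :=
  (fun x => if 0 < x then c * h.1.1 x + c * h.2.1 x else - c * h.1.1 (- x) + c * h.2.1 (- x),
   fun x => if 0 < x then c * h.1.2 x + c * h.2.2 x else - c * h.1.2 (- x) + c * h.2.2 (- x)).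
Definition V1 (h1 : cfun R * cfun R) : cfun R :=
  (fun x => if 0 < x then c * h1.1.1 x + c * h1.2.1 x else c * h1.1.1 (- x) - c * h1.2.1 (- x),
   fun x => if 0 < x then c * h1.1.2 x + c * h1.2.2 x else c * h1.1.2 (- x) - c * h1.2.2 (- x)).

Lemma gt0_neg (x : R) : x < 0 -> (0 < x) = false.
Proof. by move=> x0; apply/negbTE; rewrite -leNgt ltW. Qed.

Lemma UV_pos h x : 0 < x ->
  [/\ (U (V h)).1.1 x = h.1.1 x, (U (V h)).1.2 x = h.1.2 x,
      (U (V h)).2.1 x = h.2.1 x & (U (V h)).2.2 x = h.2.2 x].
Proof.
move=> x0; rewrite /U /V /clin /cmirror /= x0 gt0_neg ?oppr_lt0 // !opprK.
by split; rewrite -[RHS]invsqrt2K; ring.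
Qed.

Lemma aeqc_UV h : aeqc (Ipos a) (U (V h)).1 h.1 /\ aeqc (Ipos a) (U (V h)).2 h.2.
Proof. by split; apply: aeqc_pt => x [x0 _]; have [] := UV_pos h x0. Qed.

Lemma measurable_fun_r_Ipos : measurable_fun (Ipos a) r.
Proof. exact: measurable_funS (measurable_Jtwo a) (@subsetUr _ _ _) r_meas. Qed.

Lemma L2c_U g : L2c (Jtwo a) r g -> L2c (Ipos a) r (U g).1 /\ L2c (Ipos a) r (U g).2.
Proof.
move=> hg.
have gp := L2cS (measurable_Jtwo a) (measurable_Ipos a) (@subsetUr _ _ _) hg.
have gn := L2cS (measurable_Jtwo a) (measurable_Ineg a) (@subsetUl _ _ _) hg.
have gmp : L2c (Ipos a) r (cmirror g).
  by rewrite -mirror_Ineg; exact: (L2c_mirror r_even (measurable_Ineg a) gn).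
by split; apply: L2c_clin => //; [exact: measurable_Ipos | exact: measurable_fun_r_Ipos
  | exact: measurable_Ipos | exact: measurable_fun_r_Ipos].
Qed.

Lemma L2c_V h : L2c (Ipos a) r h.1 -> L2c (Ipos a) r h.2 -> L2c (Jtwo a) r (V h).
Proof.
move=> h1 h2; apply: L2cU; [exact: measurable_Ineg | exact: measurable_Ipos | |].
  have := L2c_clin (- c) c (measurable_Ipos a) measurable_fun_r_Ipos h1 h2.
  move/(L2c_mirror r_even (measurable_Ipos a)); rewrite mirror_Ipos.
  apply: eq_L2c; first exact: measurable_Ineg.
  by move=> x [_ x0]; rewrite /V /= gt0_neg.
have := L2c_clin c c (measurable_Ipos a) measurable_fun_r_Ipos h1 h2.
apply: eq_L2c; first exact: measurable_Ipos.
by move=> x [x0 _]; rewrite /V /= x0.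
Qed.

Lemma norm_U g : L2c (Jtwo a) r g ->
  (cnorm2 (Ipos a) r (U g).1 + cnorm2 (Ipos a) r (U g).2)%E = cnorm2 (Jtwo a) r g.
Proof.
move=> hg; have [io ie] := L2c_U hg.
have gp := L2cS (measurable_Jtwo a) (measurable_Ipos a) (@subsetUr _ _ _) hg.
have gn := L2cS (measurable_Jtwo a) (measurable_Ineg a) (@subsetUl _ _ _) hg.
have inr := integrable_mirror (measurable_Ineg a) gn.2.2.
rewrite mirror_Ineg in inr.
rewrite /cnorm2 -integralD //; [|exact: measurable_Ipos|exact: io.2.2|exact: ie.2.2].
rewrite /Jtwo integral_setU //; first last.
- exact: disj_Ineg_Ipos.
- exact: (measurable_int mu hg.2.2).
- exact: measurable_Ipos.
- exact: measurable_Ineg.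
rewrite (@integral_mirror _ (Ineg a)); [|exact: measurable_Ineg|exact: (measurable_int mu gn.2.2)].
rewrite mirror_Ineg -integralD //; try exact: measurable_Ipos; try exact: inr; try exact: gp.2.2.
apply: eq_integral => x _; rewrite -!EFinD; congr EFin.
by rewrite /U /clin /cmirror /= r_even -[RHS]invsqrt2K; ring.
Qed.

Lemma aeqc_U (al be : R) (g h : cfun R) : aeqc (Jtwo a) g h ->
  aeqc (Ipos a) (clin al be g (cmirror g)) (clin al be h (cmirror h)).
Proof.
move=> H; have H' := negligible_mirror H.
apply: (negligibleS _ (negligibleU H H')) => x /= hx.
apply/not_andP; apply: contra_not hx => -[h1 h2] Ix.
have Jx : Jtwo a x by right.
have Jnx : Jtwo a (- x) by left; rewrite -mirror_Ipos /mirror /= opprK.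
by have [-> ->] := h1 Jx; have [-> ->] := h2 Jnx.
Qed.

Lemma qsol_oddeven (al be : R) G G1 F G1' :
  qsol (Ipos a) p q r G G1 F -> qsol (Ineg a) p q r G G1 F ->
  (forall x, Ipos a x -> G1' x = al * G1 x - be * G1 (- x)) ->
  qsol (Ipos a) p q r (fun x => al * G x + be * G (- x)) G1'
    (fun x => al * F x + be * F (- x)).
Proof.
move=> hp hn e.
have := qsol_mirror p_even q_even r_even hn; rewrite mirror_Ineg => hr.
have := qsol_lin al be hp hr.
by apply: eq_qsol => x Ix; split => //; rewrite e //; ring.
Qed.

Lemma tmax_U g g1 f : smax a p q r g g1 f ->
  tmax (Ipos a) p q r (U g).1 (U1 g1).1 (U f).1 /\
  tmax (Ipos a) p q r (U g).2 (U1 g1).2 (U f).2.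
Proof.
move=> [[gn [fn [qn1 qn2]]] [gp [fp [qp1 qp2]]]].
have [gU1 gU2] := L2c_U (L2cU (measurable_Ineg a) (measurable_Ipos a) gn gp).
have [fU1 fU2] := L2c_U (L2cU (measurable_Ineg a) (measurable_Ipos a) fn fp).
split; do 3 split => //.
- by apply: (qsol_oddeven qp1 qn1) => x _; rewrite /U1 /clin /cmirror /=; ring.
- by apply: (qsol_oddeven qp2 qn2) => x _; rewrite /U1 /clin /cmirror /=; ring.
- by apply: (qsol_oddeven qp1 qn1) => x _; rewrite /U1 /clin /cmirror /=; ring.
- by apply: (qsol_oddeven qp2 qn2) => x _; rewrite /U1 /clin /cmirror /=; ring.
Qed.

Lemma bv_U (g g1 : cfun R) Ap Bp An Bn :
  bv_pos u u1 uh uh1 g g1 Ap Bp -> bv_neg u u1 uh uh1 g g1 An Bn ->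
  bv_pos u u1 uh uh1 (U g).1 (U1 g1).1 (c * (Ap.1 - An.1), c * (Ap.2 - An.2))
    (c * (Bp.1 + Bn.1), c * (Bp.2 + Bn.2)) /\
  bv_pos u u1 uh uh1 (U g).2 (U1 g1).2 (c * (Ap.1 + An.1), c * (Ap.2 + An.2))
    (c * (Bp.1 - Bn.1), c * (Bp.2 - Bn.2)).
Proof.
move=> [hp1 hp2] [/clim_mirror_left hn1 /clim_mirror_left hn2].
split; split.
- apply: (clim_right_clin (al := c) (be := - c) hp1 hn1).
    by move=> x _; rewrite /wr /U /U1 /clin /cmirror /= !opprK; split; ring.
  by congr pair; rewrite /=; ring.
- apply: (clim_right_clin (al := c) (be := c) hp2 hn2).
    by move=> x _; rewrite /wr /U /U1 /clin /cmirror /= !opprK; split; ring.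
  by congr pair; rewrite /=; ring.
- apply: (clim_right_clin (al := c) (be := c) hp1 hn1).
    by move=> x _; rewrite /wr /U /U1 /clin /cmirror /= !opprK; split; ring.
  by congr pair; rewrite /=; ring.
- apply: (clim_right_clin (al := c) (be := - c) hp2 hn2).
    by move=> x _; rewrite /wr /U /U1 /clin /cmirror /= !opprK; split; ring.
  by congr pair; rewrite /=; ring.
Qed.

Lemma qsol_V (G H G1 H1 F K Gv G1v Fv : R -> R) :
  qsol (Ipos a) p q r G G1 F -> qsol (Ipos a) p q r H H1 K ->
  (forall x, 0 < x -> [/\ Gv x = c * G x + c * H x, G1v x = c * G1 x + c * H1 x &
                         Fv x = c * F x + c * K x]) ->
  (forall x, x < 0 -> [/\ Gv x = - c * G (- x) + c * H (- x),
                         G1v x = c * G1 (- x) - c * H1 (- x) &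
                         Fv x = - c * F (- x) + c * K (- x)]) ->
  qsol (Ipos a) p q r Gv G1v Fv /\ qsol (Ineg a) p q r Gv G1v Fv.
Proof.
move=> hG hH ep en; split.
  by apply: eq_qsol (qsol_lin c c hG hH) => x [x0 _]; have [-> -> ->] := ep x x0.
have := qsol_mirror p_even q_even r_even (qsol_lin (- c) c hG hH).
rewrite mirror_Ipos; apply: eq_qsol => x [_ x0].
by have [-> -> ->] := en x x0; split => //; ring.
Qed.

Lemma tmax_V (h h1 hf : cfun R * cfun R) :
  tmax (Ipos a) p q r h.1 h1.1 hf.1 -> tmax (Ipos a) p q r h.2 h1.2 hf.2 ->
  smax a p q r (V h) (V1 h1) (V hf).
Proof.
move=> [g1 [f1 [q11 q12]]] [g2 [f2 [q21 q22]]].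
have gJ := L2c_V g1 g2; have fJ := L2c_V f1 f2.
have [gn fn] := (L2cS (measurable_Jtwo a) (measurable_Ineg a) (@subsetUl _ _ _) gJ,
                 L2cS (measurable_Jtwo a) (measurable_Ineg a) (@subsetUl _ _ _) fJ).
have [gp fp] := (L2cS (measurable_Jtwo a) (measurable_Ipos a) (@subsetUr _ _ _) gJ,
                 L2cS (measurable_Jtwo a) (measurable_Ipos a) (@subsetUr _ _ _) fJ).
have [a1 b1] : qsol (Ipos a) p q r (V h).1 (V1 h1).1 (V hf).1 /\
    qsol (Ineg a) p q r (V h).1 (V1 h1).1 (V hf).1.
  apply: (qsol_V q11 q21) => x x0; first by rewrite /V /V1 /= x0.
  by rewrite /V /V1 /= gt0_neg.
have [a2 b2] : qsol (Ipos a) p q r (V h).2 (V1 h1).2 (V hf).2 /\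
    qsol (Ineg a) p q r (V h).2 (V1 h1).2 (V hf).2.
  apply: (qsol_V q12 q22) => x x0; first by rewrite /V /V1 /= x0.
  by rewrite /V /V1 /= gt0_neg.
by split; split => //; split.
Qed.

Lemma bv_V (h h1 : cfun R * cfun R) Ao Bo Ae Be :
  bv_pos u u1 uh uh1 h.1 h1.1 Ao Bo -> bv_pos u u1 uh uh1 h.2 h1.2 Ae Be ->
  bv_pos u u1 uh uh1 (V h) (V1 h1) (c * (Ao.1 + Ae.1), c * (Ao.2 + Ae.2))
    (c * (Bo.1 + Be.1), c * (Bo.2 + Be.2)) /\
  bv_neg u u1 uh uh1 (V h) (V1 h1) (c * (Ae.1 - Ao.1), c * (Ae.2 - Ao.2))
    (c * (Bo.1 - Be.1), c * (Bo.2 - Be.2)).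
Proof.
move=> [ho1 ho2] [he1 he2].
split; split.
- apply: (clim_right_clin (al := c) (be := c) ho1 he1).
    by move=> x x0; rewrite /wr /V /V1 /= x0; split; ring.
  by congr pair; rewrite /=; ring.
- apply: (clim_right_clin (al := c) (be := c) ho2 he2).
    by move=> x x0; rewrite /wr /V /V1 /= x0; split; ring.
  by congr pair; rewrite /=; ring.
- apply: (clim_left_clin (al := - c) (be := c) ho1 he1).
    by move=> x x0; rewrite /wr /V /V1 /= gt0_neg //; split; ring.
  by congr pair; rewrite /=; ring.
- apply: (clim_left_clin (al := c) (be := - c) ho2 he2).
    by move=> x x0; rewrite /wr /V /V1 /= gt0_neg //; split; ring.
  by congr pair; rewrite /=; ring.
Qed.

Lemma unitarily_equiv_oddeven m11 m12 m21 : m11 * m11 - m12 * m21 = 1 ->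
  unitarily_equiv (HJ a r) (HPP a r) (sR0 a p q r u u1 uh uh1 m11 m12 m21 m11)
    (fun g f => talpha a p q r u u1 uh uh1 (alpha_of m11 m12 m21) g.1 f.1 /\
                talpha a p q r u u1 uh uh1 (alpha'_of m11 m12 m21) g.2 f.2).
Proof.
move=> det; exists U.
split; last split; last split; last split; last split; last split; last split.
- by move=> g hg; exact: L2c_U.
- by move=> g h _ _ e; split; exact: aeqc_U.
- by move=> g h _ _; split; apply: aeqc_pt => x _; rewrite /U /clin /cmirror /cadd /=; split; ring.
- move=> c1 c2 g _; split; apply: aeqc_pt => x _;
    by rewrite /U /clin /cmirror /cscale /=; split; ring.
- by move=> g hg; exact: norm_U.
- by move=> h [h1 h2]; exists (V h); split; [exact: L2c_V | exact: aeqc_UV].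
- move=> g f [g1 [hs [Ap [Bp [An [Bn [bp [bn [r1 [r2 [r3 r4]]]]]]]]]]].
  exists (U g), (U f); split; last by split; split; apply: aeqc_pt.
  have [t1 t2] := tmax_U hs; have [b1 b2] := bv_U bp bn.
  have [c1 c1'] := bcond_alpha_of_coupled c det r1 r2.
  have [c2 c2'] := bcond_alpha_of_coupled c det r3 r4.
  split; first by exists (U1 g1).1; split => //; do 2 eexists; split; first exact: b1.
  by exists (U1 g1).2; split => //; do 2 eexists; split; first exact: b2.
- move=> h hf [[h1 [th1 [Ao [Bo [bo [co1 co2]]]]]] [h2 [th2 [Ae [Be [be [ce1 ce2]]]]]]].
  exists (V h), (V hf); split; last by have [? ?] := aeqc_UV h; have [? ?] := aeqc_UV hf.
  exists (V1 (h1, h2)); split; first exact: (@tmax_V h (h1, h2) hf).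
  have [bp bn] := bv_V (h1 := (h1, h2)) bo be.
  have [d1 d2] := coupled_of_bcond_alpha c det co1 ce1.
  have [d3 d4] := coupled_of_bcond_alpha c det co2 ce2.
  by do 4 eexists; split; first exact: bp; split; first exact: bn.
Qed.

End OddEvenDecomposition.

Theorem theorem4p9 (R : realType) (a : \bar R) (ha : (0 < a)%E)
  (p q r : R -> R)
  (p_even : forall x, p (- x) = p x)
  (q_even : forall x, q (- x) = q x)
  (r_even : forall x, r (- x) = r x)
  (p_meas : measurable_fun (Jtwo a) p)
  (q_meas : measurable_fun (Jtwo a) q)
  (r_meas : measurable_fun (Jtwo a) r)
  (p_pos : {ae @lebesgue_measure R, forall x, Jtwo a x -> 0 < p x})
  (r_pos : {ae @lebesgue_measure R, forall x, Jtwo a x -> 0 < r x})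
  (p_inv_loc : loc_int (Ineg a) (fun x => (p x)^-1))
  (q_loc : loc_int (Ineg a) q)
  (r_loc : loc_int (Ineg a) r)
  (* +a and -a are limit point *)
  (LP_pos : ~ LC_right a p q r)
  (LP_neg : ~ LC_left_neg a p q r)
  (* 0+ and 0- are limit circle nonoscillatory *)
  (LC0p : LC_zero_pos a p q r) (LC0n : LC_zero_neg a p q r)
  (NO0p : NO_zero_pos a p q r) (NO0n : NO_zero_neg a p q r)
  (* S_min is bounded below by lam0 *)
  (lam0 : R)
  (Smin_lb : forall (g g1 f : cfun R), smax a p q r g g1 f ->
     (exists s t : R, 0 < s /\ s <= t /\ (t%:E < a)%E /\
        forall x, ~ (s <= `|x| <= t) -> g.1 x = 0 /\ g.2 x = 0) ->
     (lam0%:E * cnorm2 (Jtwo a) r g <=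
        \int[@lebesgue_measure R]_(x in Jtwo a)
            (r x * (f.1 x * g.1 x + f.2 x * g.2 x))%:E)%E)
  (* principal / nonprincipal solutions at 0+ (with quasi-derivatives) *)
  (u u1 uh uh1 : R -> R)
  (u_sol : qsol (Ipos a) p q r u u1 (fun x => lam0 * u x))
  (uh_sol : qsol (Ipos a) p q r uh uh1 (fun x => lam0 * uh x))
  (u_principal : exists e : R, 0 < e /\ (e%:E < a)%E /\
     (forall x, 0 < x <= e -> u x != 0) /\
     (\int[@lebesgue_measure R]_(x in [set y : R | (0 < y < e)%R])
        ((p x * u x ^+ 2)^-1)%:E = +oo)%E)
  (W_uh_u : forall x, Ipos a x -> uh x * u1 x - uh1 x * u x = 1)
  (R0 : 'M[R]_2) (R0_det : \det R0 = 1) (R0_diag : R0 ord0 ord0 = R0 ord_max ord_max) :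
  unitarily_equiv (HJ a r) (HPP a r)
    (sR0 a p q r u u1 uh uh1
       (R0 ord0 ord0) (R0 ord0 ord_max) (R0 ord_max ord0) (R0 ord_max ord_max))
    (fun g f =>
       talpha a p q r u u1 uh uh1
         (alpha_of (R0 ord0 ord0) (R0 ord0 ord_max) (R0 ord_max ord0)) g.1 f.1 /\
       talpha a p q r u u1 uh uh1
         (alpha'_of (R0 ord0 ord0) (R0 ord0 ord_max) (R0 ord_max ord0)) g.2 f.2).
Proof.
(* In the paper the endpoint hypotheses guarantee that the generalized
   boundary values exist on the maximal domain; in the graphs sR0 and talpha
   their existence is part of the definition, so only the evenness of the
   coefficients and the measurability of r are needed. *)
have det : R0 ord0 ord0 * R0 ord0 ord0 - R0 ord0 ord_max * R0 ord_max ord0 = 1.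
  by rewrite -R0_det det_mx22 R0_diag.
by rewrite -R0_diag; apply: unitarily_equiv_oddeven.
Qed.
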